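(* Let $q\ge 7$ and $s\in[1,7]$ be integers, $C$ a finite set with $|C|=2q+s$, and $M\in\mathcal M(6,q,C)$. If the maximum degree of the graph $G$ associated with $M$ is at least $4$, then $q\le 40-5s$.
   Context: $\mathcal M(6,q,C)$ is the set of $6\times q$ matrices $M$ with entries from $C$ such that each row has $q$ pairwise distinct entries, each column has $6$ pairwise distinct entries, and every pair of distinct colours of $C$ appears together in some row or some column of $M$. The frequency of a colour is the number of entries of $M$ equal to it. For rows $i\ne k$, $r(i,k)$ is the number of colours of frequency exactly $2$ appearing in both row $i$ and row $k$. The graph $G$ associated with $M$ has vertex set $\{1,\dots,6\}$ (the rows), with $\{i,k\}$ an edge iff $r(i,k)\ge 1$. *)

From mathcomp Require Import all_boot.
Set Implicit Arguments. Unset Strict Implicit. Unset Printing Implicit Defensive.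

Definition mat (q : nat) (C : finType) := {ffun 'I_6 -> {ffun 'I_q -> C}}.

Section M.
Variables (q : nat) (C : finType) (M : mat q C).

Definition rows_distinct := forall i : 'I_6, injective (M i).
Definition cols_distinct := forall j : 'I_q, injective (fun i : 'I_6 => M i j).
Definition in_row (c : C) (i : 'I_6) := [exists j : 'I_q, M i j == c].
Definition in_col (c : C) (j : 'I_q) := [exists i : 'I_6, M i j == c].
Definition pairs_covered := forall a b : C, a != b ->
  (exists i : 'I_6, in_row a i && in_row b i) \/
  (exists j : 'I_q, in_col a j && in_col b j).

Definition in_M := [/\ rows_distinct, cols_distinct & pairs_covered].

Definition freq (c : C) : nat := #|[set ij : 'I_6 * 'I_q | M ij.1 ij.2 == c]|.

Definition r (i k : 'I_6) : nat :=
  #|[set c : C | (freq c == 2) && in_row c i && in_row c k]|.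

Definition Gadj (i k : 'I_6) : bool := (i != k) && (1 <= r i k).
Definition Gdeg (i : 'I_6) : nat := #|[set k : 'I_6 | Gadj i k]|.
Definition Gmaxdeg : nat := \max_(i : 'I_6) Gdeg i.
End M.

From mathcomp Require Import all_boot.
From mathcomp Require Import zify.
Set Implicit Arguments. Unset Strict Implicit. Unset Printing Implicit Defensive.

(* Write R_i for the set of colours of row i.  Every colour lies in at least two
   rows: a colour occurring once meets only the q + 5 other colours of its row
   and column.  A colour of frequency 2, in rows i and k, meets only the colours
   of R_i :|: R_k and the 8 further entries of its two columns, whence
   |R_i :&: R_k| <= 8 - s.  If i has at least 4 neighbours in G, at most one
   row other than i is not a neighbour, so every colour of R_i lies in some
   neighbouring row: otherwise its only other row is that non-neighbour, the
   colour has frequency 2, and the row is a neighbour after all.  Summing over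
   the at most 5 neighbours gives q = |R_i| <= 5 (8 - s). *)

Lemma leq_card_bigcup (I T : finType) (P : pred I) (F : I -> {set T}) :
  #|\bigcup_(k | P k) F k| <= \sum_(k | P k) #|F k|.
Proof.
elim/big_rec2: _ => [|k A n _ IH]; first by rewrite cards0.
by rewrite (leq_trans (leq_card_setU _ _)) ?leq_add2l.
Qed.

Lemma leq_card_imset2 (aT1 aT2 rT : finType) (f : aT1 -> aT2 -> rT)
    (A1 : {set aT1}) (A2 : {set aT2}) :
  #|f @2: (A1, A2)| <= #|A1| * #|A2|.
Proof. by rewrite curry_imset2X -cardsX leq_imset_card. Qed.

Section Colours.
Variables (q : nat) (C : finType) (M : mat q C).

Definition row_colours (i : 'I_6) := [set c | in_row M c i].
Definition rows_with (c : C) := [set i | in_row M c i].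
Definition cols_with (c : C) := [set j | in_col M c j].

Lemma row_coloursP c i : reflect (exists j, M i j = c) (c \in row_colours i).
Proof. by rewrite inE; apply: (iffP existsP) => -[j /eqP]; exists j. Qed.

Lemma rows_withE c i : (i \in rows_with c) = (c \in row_colours i).
Proof. by rewrite !inE. Qed.

Lemma card_cols_with c : #|cols_with c| <= freq M c.
Proof.
have -> : cols_with c = snd @: [set ij : 'I_6 * 'I_q | M ij.1 ij.2 == c].
  apply/setP => j; rewrite inE; apply/existsP/imsetP => [[i Mij]|[[i j'] Mij ->]].
    by exists (i, j); rewrite ?inE.
  by exists i; rewrite inE in Mij.
exact: leq_imset_card.
Qed.

Lemma Gadj_freq2 i k c : i != k -> freq M c = 2 ->
  c \in row_colours i -> c \in row_colours k -> Gadj M i k.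
Proof.
move=> ik fc ci ck; rewrite /Gadj ik card_gt0; apply/set0Pn; exists c.
by rewrite !inE in ci ck; rewrite inE fc eqxx ci ck.
Qed.

Hypothesis rowsM : rows_distinct M.

Lemma card_row_colours i : #|row_colours i| = q.
Proof.
have -> : row_colours i = M i @: 'I_q.
  apply/setP => c; apply/row_coloursP/imsetP => [[j <-]|[j _ ->]]; by exists j.
by rewrite card_imset ?card_ord.
Qed.

Lemma freq_rows_with c : freq M c = #|rows_with c|.
Proof.
have -> : rows_with c = fst @: [set ij : 'I_6 * 'I_q | M ij.1 ij.2 == c].
  apply/setP => i; rewrite inE; apply/existsP/imsetP => [[j Mij]|[[i' j] Mij ->]].
    by exists (i, j); rewrite ?inE.
  by exists j; rewrite inE in Mij.
rewrite card_in_imset // => -[i1 j1] [i2 j2]; rewrite !inE /= => /eqP M1 /eqP M2 i12.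
by subst i2; congr pair; apply: (rowsM (i := i1)); rewrite M1 M2.
Qed.

Hypothesis coverM : pairs_covered M.

Lemma colours_covered c :
  [set: C] :\ c \subset (\bigcup_(k in rows_with c) row_colours k)
                         :|: [set M r j | r in ~: rows_with c, j in cols_with c].
Proof.
apply/subsetP => y /setD1P[yc _].
case: (coverM yc) => [[k /andP[yk ck]] | [j /andP[/existsP[r /eqP <-] cj]]].
  by apply/setUP; left; apply/bigcupP; exists k; rewrite ?inE.
have [rc | rc] := boolP (r \in rows_with c).
  by apply/setUP; left; apply/bigcupP; exists r => //; apply/row_coloursP; exists j.
by apply/setUP; right; apply: imset2_f; rewrite inE.
Qed.

Lemma freq_gt0 c : 1 < #|C| -> 0 < freq M c.
Proof.
case/card_gt1P => x [y [_ _ xy]].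
have [d dc] : exists d, d != c.
  by case: (eqVneq x c) => [<-|]; [exists y; rewrite eq_sym | exists x].
rewrite freq_rows_with; apply/card_gt0P.
case: (coverM dc) => [[k /andP[_ ck]] | [j /andP[_ /existsP[k ck]]]];
  exists k; rewrite inE //.
by apply/existsP; exists j.
Qed.

Lemma card_colours_le c : 0 < freq M c ->
  #|C| <= #|\bigcup_(k in rows_with c) row_colours k| + (6 - freq M c) * freq M c.
Proof.
rewrite {1}freq_rows_with => /card_gt0P[i ci].
set B := \bigcup_(k in rows_with c) row_colours k.
set D := [set M r j | r in ~: rows_with c, j in cols_with c].
have cB : c \in B by apply/bigcupP; exists i; rewrite // -rows_withE.
have sub : [set: C] \subset B :|: D.
  apply/subsetP => y _; case: (eqVneq y c) => [-> | yc]; first by rewrite inE cB.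
  by apply: (subsetP (colours_covered c)); rewrite !inE yc.
rewrite -cardsT (leq_trans (subset_leq_card sub)) // (leq_trans (leq_card_setU B D)) //.
rewrite leq_add2l (leq_trans (leq_card_imset2 _ _ _)) // leq_mul ?card_cols_with //.
by have := cardsC (rows_with c); rewrite card_ord freq_rows_with; lia.
Qed.

Lemma freq_ge2 c : q + 5 < #|C| -> 1 < freq M c.
Proof.
move=> Cq; have f0 : 0 < freq M c by apply: freq_gt0; lia.
rewrite ltn_neqAle f0 andbT; apply/eqP => /esym f1.
have := card_colours_le f0; rewrite f1.
have := leq_card_bigcup (fun k => k \in rows_with c) row_colours.
rewrite (eq_bigr (fun=> q)) => [|k _]; last exact: card_row_colours.
rewrite sum_nat_const -freq_rows_with f1; lia.
Qed.

Lemma card_rowI_le i k : Gadj M i k ->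
  #|C| + #|row_colours i :&: row_colours k| <= 2 * q + 8.
Proof.
case/andP => ik /card_gt0P[c]; rewrite !inE => /andP[/andP[/eqP fc ci] ck].
have rc : rows_with c = [set i; k].
  apply/esym/eqP; rewrite eqEcard cards2 ik -freq_rows_with fc andbT.
  by apply/subsetP => x /set2P[] ->; rewrite inE.
have := card_colours_le (c := c); rewrite fc rc big_setU1 ?inE //= big_set1.
have := cardsUI (row_colours i) (row_colours k); rewrite !card_row_colours.
lia.
Qed.

Lemma row_colours_sub_nbhd i : q + 5 < #|C| -> 4 <= Gdeg M i ->
  row_colours i \subset \bigcup_(k | Gadj M i k) (row_colours i :&: row_colours k).
Proof.
move=> Cq deg4; apply/subsetP => c ci.
have [k /andP[ik ck] | noN] := pickP [pred k | Gadj M i k && (c \in row_colours k)].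
  by apply/bigcupP; exists k; rewrite // inE ci.
exfalso; set N := [set k | Gadj M i k]; set A := rows_with c.
have AN : A \subset ~: N.
  apply/subsetP => k; rewrite !inE => ck.
  by apply: contraFN (noN k) => ik; rewrite /= ik inE.
have cardA : #|A| <= 2.
  rewrite (leq_trans (subset_leq_card AN)) // cardsCs setCK card_ord.
  by rewrite /Gdeg -/N in deg4; lia.
have fc : freq M c = 2 by have := freq_ge2 c Cq; rewrite freq_rows_with -/A; lia.
have [k] : exists k, k \in A :\ i.
  apply/card_gt0P; move: fc; rewrite freq_rows_with (cardsD1 i A).
  by have := leq_b1 (i \in A); lia.
rewrite in_setD1 rows_withE => /andP[ki ck].
by have := noN k; rewrite /= ck andbT (Gadj_freq2 _ fc ci ck) // eq_sym.
Qed.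

End Colours.

Lemma Gdeg_le5 (q : nat) (C : finType) (M : mat q C) i : Gdeg M i <= 5.
Proof.
have sub : [set k | Gadj M i k] \subset [set~ i].
  by apply/subsetP => k; rewrite !inE /Gadj eq_sym => /andP[].
by have := subset_leq_card sub; rewrite cardsC1 card_ord.
Qed.

Theorem claim5 (q s : nat) (C : finType) (M : mat q C) :
  7 <= q -> 1 <= s <= 7 -> #|C| = 2 * q + s ->
  in_M M -> 4 <= Gmaxdeg M ->
  q <= 40 - 5 * s.
Proof.
move=> q7 s17 HC [rowsM _ coverM] maxdeg.
have [i deg4] : exists i, 4 <= Gdeg M i.
  have [|i Ei] := @eq_bigmax _ (Gdeg M); first by rewrite card_ord.
  by exists i; rewrite -Ei.
have Cq : q + 5 < #|C| by lia.
have rowI_le k : Gadj M i k -> #|row_colours M i :&: row_colours M k| <= 8 - s.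
  by move/(card_rowI_le rowsM coverM); lia.
rewrite -(card_row_colours rowsM i).
apply: leq_trans (subset_leq_card (row_colours_sub_nbhd rowsM coverM Cq deg4)) _.
apply: leq_trans (leq_card_bigcup _ _) _.
apply: (@leq_trans (\sum_(k | Gadj M i k) (8 - s))); first exact: leq_sum.
rewrite sum_nat_cond_const -/(Gdeg M i).
by apply: leq_trans (leq_mul (Gdeg_le5 M i) (leqnn _)) _; lia.
Qed.
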